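(* Let $R$ be an associative ring with identity, $n$ a positive integer, and $0\to A\to G_{n-1}\to G_{n-2}\to\cdots\to G_0\to M\to 0$ an exact sequence of left $R$-modules with all $G_i$ Gorenstein projective. Then: (1) there exist exact sequences $0\to A\to P_{n-1}\to P_{n-2}\to\cdots\to P_0\to N\to 0$ and $0\to M\to N\to G\to 0$ of left $R$-modules with all $P_i$ projective and $G$ Gorenstein projective; in particular, a left $R$-module is an $n$-syzygy module if and only if it is a Gorenstein $n$-syzygy module; (2) there exist exact sequences $0\to B\to Q_{n-1}\to Q_{n-2}\to\cdots\to Q_0\to M\to 0$ and $0\to H\to B\to A\to 0$ of left $R$-modules with all $Q_i$ projective and $H$ Gorenstein projective.
   Context: A left $R$-module $G$ is Gorenstein projective if there is an exact sequence $\cdots\to P_1\to P_0\to P^0\to P^1\to\cdots$ of projective left $R$-modules which remains exact after applying $\operatorname{Hom}_R(-,P)$ for every projective left $R$-module $P$, and such that $G\cong \operatorname{Im}(P_0\to P^0)$. For $n\ge1$, a module $A$ is an $n$-syzygy module if there is an exact sequence $0\to A\to P_{n-1}\to\cdots\to P_0\to M\to 0$ with all $P_i$ projective, for some module $M$; it is a Gorenstein $n$-syzygy module if there is an exact sequence $0\to A\to G_{n-1}\to\cdots\to G_0\to M\to 0$ with all $G_i$ Gorenstein projective, for some module $M$. *)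

From HB Require Import structures.
From mathcomp Require Import all_boot all_order all_algebra.
Unset Printing Implicit Defensive.
Import Order.TTheory GRing.Theory Num.Theory.
Local Open Scope ring_scope.

Definition surj {U V : Type} (f : U -> V) : Prop := forall v, exists u, f u = v.

Definition short_exact {R : pzRingType} {X Y Z : lmodType R}
  (f : {linear X -> Y}) (g : {linear Y -> Z}) : Prop :=
  [/\ injective f, (forall y, g y = 0 <-> exists x, f x = y) & surj g].

Definition projective {R : pzRingType} (P : lmodType R) : Prop :=
  forall (V W : lmodType R) (p : {linear V -> W}) (f : {linear P -> W}),
    surj p -> exists g : {linear P -> V}, forall x, p (g x) = f x.

(* Gorenstein projective: a complete resolution ... -> P i -> P (i+1) -> ...
   of projectives (indexed by int; P_0 = P 0, P^0 = P 1), exact, remaining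
   exact under Hom(-,Q) for every projective Q, with G ≅ Im(P 0 -> P 1). *)
Definition gorenstein_projective {R : pzRingType} (G : lmodType R) : Prop :=
  exists (P : int -> lmodType R) (d : forall i : int, {linear P i -> P (i + 1)}),
    [/\ (forall i, projective (P i)),
        (forall (i : int) (y : P (i + 1)), d (i + 1) y = 0 <-> exists x, d i x = y),
        (forall (Q : lmodType R), projective Q ->
           forall (i : int) (f : {linear P (i + 1) -> Q}),
             (forall x, f (d i x) = 0) ->
             exists g : {linear P (i + 1 + 1) -> Q}, forall y, g (d (i + 1) y) = f y) &
        exists iota : {linear G -> P (0 + 1)},
          injective iota /\ forall y, (exists g, iota g = y) <-> (exists x, d 0 x = y)].

(* Exact sequence 0 -> A --a--> Y n --e n--> Y (n-1) -> ... --e 1--> Y 0 -> 0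
   (A external; Y 0 is the right end M; Y (i+1) is the i-th middle term,
   required to satisfy C for 1 <= i <= n). *)
Definition lexact {R : pzRingType} (C : lmodType R -> Prop) (n : nat)
  (A : lmodType R) (Y : nat -> lmodType R) (e : forall i, {linear Y i -> Y i.-1})
  (a : {linear A -> Y n}) : Prop :=
  [/\ injective a,
      (forall y : Y n, e n y = 0 <-> exists x, a x = y),
      (forall i, (0 < i < n)%N -> forall y : Y i, e i y = 0 <-> exists z : Y i.+1, e i.+1 z = y),
      surj (e 1%N) &
      (forall i, (0 < i <= n)%N -> C (Y i))].

(* Exact sequence 0 -> W n --f n--> W (n-1) -> ... -> W 0 --p--> M -> 0
   (M external; W n is the left end B; W i must satisfy C for i < n). *)
Definition rexact {R : pzRingType} (C : lmodType R -> Prop) (n : nat)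
  (M : lmodType R) (W : nat -> lmodType R) (f : forall i, {linear W i -> W i.-1})
  (p : {linear W 0%N -> M}) : Prop :=
  [/\ injective (f n),
      (forall i, (0 < i < n)%N -> forall y : W i, f i y = 0 <-> exists z : W i.+1, f i.+1 z = y),
      (forall y : W 0%N, p y = 0 <-> exists z : W 1%N, f 1%N z = y),
      surj p &
      (forall i, (i < n)%N -> C (W i))].

Definition syzygy {R : pzRingType} (n : nat) (A : lmodType R) : Prop :=
  exists (Y : nat -> lmodType R) (e : forall i, {linear Y i -> Y i.-1}) (a : {linear A -> Y n}),
    @lexact R (@projective R) n A Y e a.

Definition gorenstein_syzygy {R : pzRingType} (n : nat) (A : lmodType R) : Prop :=
  exists (Y : nat -> lmodType R) (e : forall i, {linear Y i -> Y i.-1}) (a : {linear A -> Y n}),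
    @lexact R (@gorenstein_projective R) n A Y e a.

From HB Require Import structures.
From mathcomp Require Import all_boot all_order all_algebra.
From Stdlib Require Import ClassicalEpsilon FunctionalExtensionality PropExtensionality.
Import GRing.Theory.
Local Open Scope ring_scope.

(* Gorenstein projectivity is first recast intrinsically:
   G is Gorenstein projective iff it lies in a "Gorenstein class" S, i.e. every K
   in S has Ext^1(K, projective) = 0 and sits in 0 -> K' -> Q -> K -> 0 and
   0 -> K -> Q' -> K'' -> 0 with Q, Q' projective and K', K'' in S.  The cycles of
   a complete resolution form such a class; conversely, splicing chosen sequences
   of a class yields a complete resolution.  By the horseshoe lemma, extensions of
   Gorenstein projectives are Gorenstein projective.  Both parts of the theorem
   are then proved by induction on n, cutting the sequence at K = ker (G_1 -> M):
   part (1) pushes out along K -> G_1 and replaces the Gorenstein projective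
   pushout by a projective (third isomorphism theorem for cokernels); part (2)
   covers G_1 by a projective and pulls back along it (third isomorphism theorem
   for kernels).  The equivalence of n-syzygies and Gorenstein n-syzygies follows
   from (1). *)

Section LinearMaps.
Context {R : pzRingType}.
Implicit Types U V W : lmodType R.

Definition linL {U V} (f : U -> V) (lf : linear f) : {linear U -> V} :=
  HB.pack f (GRing.isLinear.Build R U V *:%R f lf).

Section Pairing.
Context {U V W : lmodType R}.

Fact pair_linear (f : {linear U -> V}) (g : {linear U -> W}) :
  linear (fun x => (f x, g x) : (V * W)%type).
Proof. by move=> a x y; rewrite !linearP. Qed.

Definition pairL f g := linL _ (pair_linear f g).

Fact copair_linear (f : {linear U -> W}) (g : {linear V -> W}) :
  linear (fun x : U * V => f x.1 + g x.2).
Proof. by move=> a x y /=; rewrite !linearP scalerDr addrACA. Qed.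

Definition copairL f g := linL _ (copair_linear f g).
End Pairing.

Definition inlL {U V} : {linear U -> (U * V)%type} := pairL idfun \0.
Definition inrL {U V} : {linear V -> (U * V)%type} := pairL \0 idfun.

Lemma pair_split {U V} (x : U * V) : inlL x.1 + inrL x.2 = x.
Proof. by case: x => a b; congr (_, _); rewrite /= ?addr0 ?add0r. Qed.

Lemma factor_surj {U V W} (p : {linear U -> V}) (f : {linear U -> W}) :
  surj p -> (forall x, p x = 0 -> f x = 0) ->
  exists g : {linear V -> W}, forall x, g (p x) = f x.
Proof.
move=> p_surj ker_sub.
pose pre (v : V) : U := epsilon (inhabits 0) (fun x => p x = v).
have preP v : p (pre v) = v by apply: (epsilon_spec (inhabits 0) (fun x => p x = v)).
have f_eq x y : p x = p y -> f x = f y.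
  by move=> e; apply/eqP; rewrite -subr_eq0 -linearB ker_sub // linearB e subrr.
have g_lin : linear (fun v => f (pre v)).
  by move=> a u v /=; rewrite -linearP; apply: f_eq; rewrite !linearP !preP.
by exists (linL _ g_lin) => x; apply: f_eq; rewrite preP.
Qed.

Lemma factor_inj {U V W} (i : {linear U -> V}) (f : {linear W -> V}) :
  injective i -> (forall w, exists u, i u = f w) ->
  exists g : {linear W -> U}, forall w, i (g w) = f w.
Proof.
move=> i_inj im_sub.
pose g (w : W) : U := epsilon (inhabits 0) (fun u => i u = f w).
have gP w : i (g w) = f w by apply: (epsilon_spec (inhabits 0) (fun u => i u = f w)).
have g_lin : linear g by move=> a u v; apply: i_inj; rewrite linearP !gP linearP.
by exists (linL _ g_lin).
Qed.

Lemma inj_eq0 {U V} {f : {linear U -> V}} {x} : injective f -> f x = 0 -> x = 0.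
Proof. by move=> f_inj e; apply: f_inj; rewrite e linear0. Qed.

Lemma ker0_inj {U V} (f : {linear U -> V}) : (forall x, f x = 0 -> x = 0) -> injective f.
Proof. exact: raddf_inj. Qed.

End LinearMaps.

(* Classical truth value of a proposition, used to carve subtypes out of
   arbitrary (undecidable) predicates. *)
Definition holds (P : Prop) : bool := if excluded_middle_informative P then true else false.
Lemma holdsP (P : Prop) : reflect P (holds P).
Proof. by rewrite /holds; case: excluded_middle_informative => h; constructor. Qed.

Section SubmoduleQuotient.
Variables (R : pzRingType) (V : lmodType R) (S : V -> Prop).
Hypotheses (S0 : S 0) (S_lin : forall a x y, S x -> S y -> S (a *: x + y)).

Lemma S_add {x y} : S x -> S y -> S (x + y).
Proof. by move=> hx hy; have := S_lin 1 _ _ hx hy; rewrite scale1r. Qed.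

Lemma S_scale a {x} : S x -> S (a *: x).
Proof. by move=> hx; have := S_lin a _ _ hx S0; rewrite addr0. Qed.

Lemma S_opp {x} : S x -> S (- x).
Proof. by rewrite -scaleN1r; apply: S_scale. Qed.

Lemma S_sub {x y} : S x -> S y -> S (x - y).
Proof. by move=> hx hy; apply: S_add hx (S_opp hy). Qed.

Definition in_sub : pred V := fun x => holds (S x).
Fact in_sub_closed : GRing.submod_closed in_sub.
Proof.
split; first exact/holdsP.
by move=> a x y /holdsP hx /holdsP hy; apply/holdsP; apply: S_lin.
Qed.
HB.instance Definition _ := GRing.isSubmodClosed.Build R V in_sub in_sub_closed.
Definition submod := {x : V | in_sub x}.
HB.instance Definition _ := SubChoice.copy submod {x : V | in_sub x}.
HB.instance Definition _ := [SubChoice_isSubLmodule of submod by <:].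

Lemma submodule_exists : exists (U : lmodType R) (i : {linear U -> V}),
  injective i /\ forall y, (exists x, i x = y) <-> S y.
Proof.
exists submod, (val : {linear submod -> V}); split; first exact: val_inj.
move=> y; split; first by case=> x <-; apply/holdsP; exact: (valP x).
by move=> hy; exists (Sub y (introT (holdsP _) hy)); exact: SubK.
Qed.

(* The quotient V / S: each class is represented by a chosen element. *)
Definition canon (x : V) : V := epsilon (inhabits 0) (fun y => S (x - y)).
Lemma canonP x : S (x - canon x).
Proof. by apply: (epsilon_spec (inhabits 0) (fun y => S (x - y))); exists x; rewrite subrr. Qed.

Lemma canon_eq x y : S (x - y) -> canon x = canon y.
Proof.
move=> hxy; rewrite /canon; congr epsilon; apply: functional_extensionality => z.
apply: propositional_extensionality; split => h.
  by have := S_sub h hxy; rewrite opprB addrC addrA subrK.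
by have := S_add hxy h; rewrite addrA subrK.
Qed.

Lemma canon_id x : canon (canon x) = canon x.
Proof. by apply: canon_eq; have := S_opp (canonP x); rewrite opprB. Qed.

Definition quot := {x : V | canon x == x}.
HB.instance Definition _ := Choice.on quot.
Definition qpi (x : V) : quot := exist _ (canon x) (introT eqP (canon_id x)).

Lemma qpi_val q : qpi (val q) = q.
Proof. by apply: val_inj; case: q => x /= /eqP. Qed.

Lemma qpi_eq x y : qpi x = qpi y <-> S (x - y).
Proof.
split=> [/(congr1 val) /= e | /canon_eq e]; last exact: val_inj.
have := S_sub (canonP x) (canonP y).
by rewrite e opprB addrA subrK.
Qed.

Lemma qpi_comp x y : S (x - y) -> qpi x = qpi y. Proof. by move/qpi_eq. Qed.

Lemma val_qpi x : S (x - val (qpi x)). Proof. exact: canonP. Qed.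

Definition q_add (p q : quot) := qpi (val p + val q).
Definition q_opp (q : quot) := qpi (- val q).
Definition q_scale a (q : quot) := qpi (a *: val q).

(* qpi is compatible with the operations, so that the module axioms of the
   quotient are inherited from those of V. *)
Lemma qpiD x y : qpi (x + y) = q_add (qpi x) (qpi y).
Proof.
apply: qpi_comp; rewrite opprD addrACA.
by apply: S_add; apply: val_qpi.
Qed.

Lemma qpiN x : qpi (- x) = q_opp (qpi x).
Proof. by apply: qpi_comp; rewrite -opprD; apply: S_opp (val_qpi x). Qed.

Lemma qpiZ a x : qpi (a *: x) = q_scale a (qpi x).
Proof. by apply: qpi_comp; rewrite -scalerBr; apply: S_scale; apply: val_qpi. Qed.

Fact q_addA : associative q_add.
Proof. by move=> p q r; rewrite -[p]qpi_val -[q]qpi_val -[r]qpi_val -!qpiD addrA. Qed.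
Fact q_addC : commutative q_add.
Proof. by move=> p q; rewrite /q_add addrC. Qed.
Fact q_add0 : left_id (qpi 0) q_add.
Proof. by move=> q; rewrite -[q]qpi_val -qpiD add0r. Qed.
Fact q_addN : left_inverse (qpi 0) q_opp q_add.
Proof. by move=> q; rewrite -[q]qpi_val -qpiN -qpiD addNr. Qed.
HB.instance Definition _ := GRing.isZmodule.Build quot q_addA q_addC q_add0 q_addN.
Lemma qpi_additive x y : qpi (x + y) = qpi x + qpi y. Proof. exact: qpiD. Qed.

Fact q_scaleA a b q : q_scale a (q_scale b q) = q_scale (a * b) q.
Proof. by rewrite -[q]qpi_val -!qpiZ scalerA. Qed.
Fact q_scale1 : left_id 1 q_scale.
Proof. by move=> q; rewrite -[q]qpi_val -qpiZ scale1r. Qed.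
Fact q_scaleDr : right_distributive q_scale +%R.
Proof.
by move=> a p q; rewrite -[p]qpi_val -[q]qpi_val -qpi_additive -!qpiZ -qpi_additive scalerDr.
Qed.
Fact q_scaleDl q : {morph q_scale^~ q : a b / a + b}.
Proof. by move=> a b; rewrite -[q]qpi_val -!qpiZ -qpi_additive scalerDl. Qed.
HB.instance Definition _ :=
  GRing.Zmodule_isLmodule.Build R quot q_scaleA q_scale1 q_scaleDr q_scaleDl.

Fact qpi_linear : linear qpi.
Proof. by move=> a x y; rewrite qpi_additive qpiZ. Qed.

Lemma quotient_exists : exists (Q : lmodType R) (p : {linear V -> Q}),
  surj p /\ forall x, p x = 0 <-> S x.
Proof.
exists quot, (linL _ qpi_linear); split=> [q | x]; first by exists (val q); rewrite /= qpi_val.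
by rewrite /= -[0]/(qpi 0) qpi_eq subr0.
Qed.
End SubmoduleQuotient.

Section KernelCokernel.
Context {R : pzRingType}.
Implicit Types U V W : lmodType R.

Lemma kernel_exists {V W} (f : {linear V -> W}) :
  exists (K : lmodType R) (k : {linear K -> V}),
    injective k /\ forall y, (exists x, k x = y) <-> f y = 0.
Proof.
apply: submodule_exists; first exact: linear0.
by move=> a x y hx hy; rewrite linearP hx hy scaler0 addr0.
Qed.

Lemma cokernel_exists {U V} (f : {linear U -> V}) :
  exists (Q : lmodType R) (p : {linear V -> Q}),
    surj p /\ forall y, p y = 0 <-> exists x, f x = y.
Proof.
apply: quotient_exists; first by exists 0; rewrite linear0.
by move=> a _ _ [x <-] [y <-]; exists (a *: x + y); rewrite linearP.
Qed.

(* The kernel of the identity of R is a zero module. *)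
Lemma zero_module_exists : exists Z : lmodType R, forall z : Z, z = 0.
Proof.
have [K [k [k_inj k_im]]] := kernel_exists (idfun : {linear R^o -> R^o}).
by exists K => z; apply: k_inj; rewrite linear0; apply/k_im; exists z.
Qed.
End KernelCokernel.

Section Projectives.
Context {R : pzRingType}.
Implicit Types U V W A B X K Q C P T Z : lmodType R.

Lemma ses_comp0 {U V W} {f : {linear U -> V}} {g : {linear V -> W}} x :
  short_exact f g -> g (f x) = 0.
Proof. by case=> _ fg_exact _; apply/fg_exact; exists x. Qed.

Lemma projective_prod (P1 P2 : lmodType R) :
  projective P1 -> projective P2 -> projective (P1 * P2)%type.
Proof.
move=> P1_proj P2_proj V W p f p_surj.
have [g1 hg1] := P1_proj V W p (f \o inlL) p_surj.
have [g2 hg2] := P2_proj V W p (f \o inrL) p_surj.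
by exists (copairL g1 g2) => x; rewrite /= linearD hg1 hg2 /= -linearD pair_split.
Qed.

Lemma projective_zero {Z} : (forall z : Z, z = 0) -> projective Z.
Proof. by move=> Z0 V W p f _; exists \0 => z; rewrite /= (Z0 z) !linear0. Qed.

(* Ext^1(C, T) = 0 for every projective T: every map to T defined on the
   kernel of an epimorphism onto C extends along that kernel. *)
Definition ext_proj_vanishes C : Prop :=
  forall U V (f : {linear U -> V}) (g : {linear V -> C}), short_exact f g ->
  forall T, projective T -> forall h : {linear U -> T},
  exists h' : {linear V -> T}, forall x, h' (f x) = h x.

(* A short exact sequence ending in a projective splits: a retraction of f
   is x |-> f^-1 (x - s (g x)) where s is a section of g. *)
Lemma ses_retraction {U V C} {f : {linear U -> V}} {g : {linear V -> C}} :
  projective C -> short_exact f g -> exists r : {linear V -> U}, forall x, r (f x) = x.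
Proof.
move=> C_proj fg; case: (fg) => f_inj fg_exact g_surj.
have [s hs] := C_proj V C g idfun g_surj.
have [r hr] : exists r : {linear V -> U}, forall v, f (r v) = (idfun \- (s \o g)) v.
  by apply: factor_inj => // v; apply/fg_exact; rewrite /= linearB /= hs subrr.
exists r => x; apply: f_inj.
by rewrite hr /= (ses_comp0 x fg) linear0 subr0.
Qed.

Lemma projective_ext_vanishes P : projective P -> ext_proj_vanishes P.
Proof.
move=> P_proj U V f g fg T _ h; have [r hr] := ses_retraction P_proj fg.
by exists (h \o r) => x /=; rewrite hr.
Qed.

(* Given 0 -> U -> V -> X -> 0 and 0 -> A -> X -> B -> 0, the preimage U' of A
   in V sits in exact sequences 0 -> U -> U' -> A -> 0 and 0 -> U' -> V -> B -> 0. *)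
Lemma ses_preimage {U V A X B} {f : {linear U -> V}} {g : {linear V -> X}}
    {u : {linear A -> X}} {v : {linear X -> B}} :
  short_exact f g -> short_exact u v ->
  exists U' (f1 : {linear U -> U'}) (g1 : {linear U' -> A}) (k : {linear U' -> V}),
    [/\ short_exact f1 g1, short_exact k (v \o g) & forall x, k (f1 x) = f x].
Proof.
move=> fg uv; case: (fg) => f_inj fg_exact g_surj; case: (uv) => u_inj uv_exact v_surj.
have [U' [k [k_inj k_im]]] := kernel_exists (v \o g).
have vgk z : v (g (k z)) = 0 by apply/k_im; exists z.
have [f1 hf1] : exists f1 : {linear U -> U'}, forall x, k (f1 x) = f x.
  by apply: factor_inj => // x; apply/k_im; rewrite /= (ses_comp0 x fg) linear0.
have [g1 hg1] : exists g1 : {linear U' -> A}, forall z, u (g1 z) = (g \o k) z.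
  by apply: factor_inj => // z; apply/uv_exact; apply: vgk.
exists U', f1, g1, k; split => //; split => //.
- by move=> x y e; apply: f_inj; rewrite -!hf1 e.
- move=> z; split=> [g1z0 | [x <-]].
    have /fg_exact [x hx] : g (k z) = 0 by rewrite -[g (k z)]/((g \o k) z) -hg1 g1z0 linear0.
    by exists x; apply: k_inj; rewrite hf1.
  by apply: u_inj; rewrite hg1 /= hf1 (ses_comp0 x fg) linear0.
- move=> a; have [y hy] := g_surj (u a).
  have [z hz] : exists z, k z = y by apply/k_im; rewrite /= hy (ses_comp0 a uv).
  by exists z; apply: u_inj; rewrite hg1 /= hz.
- by move=> y; split=> /k_im.
- by move=> b; have [x <-] := v_surj b; have [y <-] := g_surj x; exists y.
Qed.

Lemma ext_proj_vanishes_extension {A X B} {u : {linear A -> X}} {v : {linear X -> B}} :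
  short_exact u v -> ext_proj_vanishes A -> ext_proj_vanishes B -> ext_proj_vanishes X.
Proof.
move=> uv A_ext B_ext U V f g fg T T_proj h.
have [U' [f1 [g1 [k [f1g1 kvg kf1]]]]] := ses_preimage fg uv.
have [h1 hh1] := A_ext _ _ _ _ f1g1 T T_proj h.
have [h2 hh2] := B_ext _ _ _ _ kvg T T_proj h1.
by exists h2 => x; rewrite -kf1 hh2 hh1.
Qed.

Lemma ext_proj_vanishes_of_presentation {K Q C} {i : {linear K -> Q}} {p : {linear Q -> C}} :
  short_exact i p -> projective Q ->
  (forall T, projective T -> forall h : {linear K -> T},
     exists g : {linear Q -> T}, forall x, g (i x) = h x) -> ext_proj_vanishes C.
Proof.
move=> ip Q_proj K_ext U V f g fg T T_proj h.
case: (ip) => i_inj ip_exact p_surj; case: (fg) => f_inj fg_exact g_surj.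
(* compare the presentation with 0 -> U -> V -> C -> 0 *)
have [lam hlam] := Q_proj V C g p g_surj.
have [mu hmu] : exists mu : {linear K -> U}, forall k, f (mu k) = (lam \o i) k.
  by apply: factor_inj => // k; apply/fg_exact; rewrite /= hlam (ses_comp0 k ip).
have [psi hpsi] := K_ext T T_proj (h \o mu).
(* V is the quotient of U x Q by the kernel of [f, lam], on which [h, psi] vanishes *)
have Phi_surj : surj (copairL f lam).
  move=> y; have [q hq] := p_surj (g y).
  have /fg_exact [x hx] : g (y - lam q) = 0 by rewrite linearB hlam hq subrr.
  by exists (x, q); rewrite /= hx subrK.
have [h' hh'] : exists h' : {linear V -> T}, forall z, h' (copairL f lam z) = copairL h psi z.
  apply: factor_surj => // -[x q] /= e.
  have /ip_exact [k hk] : p q = 0.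
    by rewrite -hlam; have := congr1 g e; rewrite linear0 linearD (ses_comp0 _ fg) add0r.
  have -> : x = - mu k.
    by apply: f_inj; rewrite linearN hmu /= hk; apply/eqP; rewrite -addr_eq0 e.
  by rewrite -hk hpsi /= linearN addNr.
by exists h' => x; have := hh' (x, 0); rewrite /= !linear0 !addr0.
Qed.
End Projectives.

(* The horseshoe lemma, in the two forms needed to show that Gorenstein
   projective modules are closed under extensions. *)
Section Horseshoe.
Context {R : pzRingType}.
Context {A X B : lmodType R} {u : {linear A -> X}} {v : {linear X -> B}}.
Hypothesis uv : short_exact u v.

Lemma horseshoe_presentation {KA QA KB QB : lmodType R}
    {iA : {linear KA -> QA}} {pA : {linear QA -> A}}
    {iB : {linear KB -> QB}} {pB : {linear QB -> B}} :
  short_exact iA pA -> short_exact iB pB -> projective QB ->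
  exists (KX : lmodType R) (iX : {linear KX -> (QA * QB)%type})
    (pX : {linear (QA * QB)%type -> X}) (uK : {linear KA -> KX}) (vK : {linear KX -> KB}),
    short_exact iX pX /\ short_exact uK vK.
Proof.
move=> iApA iBpB QB_proj.
case: (uv) => u_inj uv_exact v_surj.
case: (iApA) => iA_inj iApA_exact pA_surj; case: (iBpB) => iB_inj iBpB_exact pB_surj.
have [lam hlam] := QB_proj X B v pB v_surj.
pose pX := copairL (u \o pA) lam.
have [KX [iX [iX_inj iX_im]]] := kernel_exists pX.
have pX_iX z : pX (iX z) = 0 by apply/iX_im; exists z.
have [uK huK] : exists uK : {linear KA -> KX}, forall k, iX (uK k) = (inlL \o iA) k.
  apply: factor_inj => // k; apply/iX_im.
  by rewrite /= (ses_comp0 k iApA) !linear0 addr0.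
have [vK hvK] : exists vK : {linear KX -> KB}, forall z, iB (vK z) = (snd \o iX) z.
  apply: factor_inj => // z; apply/iBpB_exact; rewrite /= -hlam.
  have := pX_iX z; rewrite /= => /eqP; rewrite addrC addr_eq0 => /eqP ->.
  by rewrite linearN (ses_comp0 _ uv) oppr0.
exists KX, iX, pX, uK, vK; split; split => //.
- by move=> y; split=> /iX_im.
- move=> x; have [q hq] := pB_surj (v x).
  have /uv_exact [a ha] : v (x - lam q) = 0 by rewrite linearB hlam hq subrr.
  by have [qa hqa] := pA_surj a; exists (qa, q); rewrite /= hqa ha subrK.
- by move=> k1 k2 /(congr1 iX); rewrite !huK => /(congr1 fst) /iA_inj.
- move=> z; split=> [vKz0 | [k <-]]; last first.
    by apply: iB_inj; rewrite hvK /= huK /= linear0.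
  have snd0 : (iX z).2 = 0 by rewrite -[_.2]/((snd \o iX) z) -hvK vKz0 linear0.
  have := pX_iX z; rewrite /= snd0 linear0 addr0 => /(inj_eq0 u_inj) /iApA_exact [k hk].
  exists k; apply: iX_inj; rewrite huK /= hk.
  by case: (iX z) snd0 => a b /= ->.
- move=> kb; have /uv_exact [a ha] : v (lam (iB kb)) = 0 by rewrite hlam (ses_comp0 _ iBpB).
  have [qa hqa] := pA_surj a.
  have /iX_im [z hz] : pX (- qa, iB kb) = 0 by rewrite /= !linearN hqa ha addNr.
  by exists z; apply: iB_inj; rewrite hvK /= hz.
Qed.

Lemma horseshoe_copresentation {QA CA QB CB : lmodType R}
    {iA : {linear A -> QA}} {pA : {linear QA -> CA}}
    {iB : {linear B -> QB}} {pB : {linear QB -> CB}} :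
  short_exact iA pA -> short_exact iB pB -> projective QA -> ext_proj_vanishes B ->
  exists (CX : lmodType R) (iX : {linear X -> (QA * QB)%type})
    (pX : {linear (QA * QB)%type -> CX}) (uC : {linear CA -> CX}) (vC : {linear CX -> CB}),
    short_exact iX pX /\ short_exact uC vC.
Proof.
move=> iApA iBpB QA_proj B_ext.
case: (uv) => u_inj uv_exact v_surj.
case: (iApA) => iA_inj iApA_exact pA_surj; case: (iBpB) => iB_inj iBpB_exact pB_surj.
have [phi hphi] := B_ext _ _ u v uv QA QA_proj iA.
pose iX := pairL phi (iB \o v).
have [CX [pX [pX_surj pX_ker]]] := cokernel_exists iX.
have from_A x : iB (v x) = 0 -> exists2 a, u a = x & phi x = iA a.
  by move=> /(inj_eq0 iB_inj) /uv_exact [a <-]; exists a; rewrite ?hphi.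
have [uC huC] : exists uC : {linear CA -> CX}, forall q, uC (pA q) = (pX \o inlL) q.
  apply: factor_surj => // q /iApA_exact [a <-].
  by apply/pX_ker; exists (u a); rewrite /= hphi (ses_comp0 a uv) linear0.
have [vC hvC] : exists vC : {linear CX -> CB}, forall y, vC (pX y) = (pB \o snd) y.
  by apply: factor_surj => // y /pX_ker [x <-]; rewrite /= (ses_comp0 _ iBpB).
exists CX, iX, pX, uC, vC; split; split => //.
- apply: ker0_inj => x e; have [a ax phix] := from_A x (congr1 snd e).
  have phi0 : phi x = 0 := congr1 fst e.
  by rewrite -ax (inj_eq0 iA_inj (etrans (esym phix) phi0)) linear0.
- apply: ker0_inj => c; have [q <-] := pA_surj c; rewrite huC => /pX_ker [x [hx1 hx2]].
  have [a ha e1] := from_A x hx2.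
  by rewrite -hx1 e1 (ses_comp0 a iApA).
- move=> c; split=> [|[c' <-]]; last first.
    by have [q <-] := pA_surj c'; rewrite huC hvC /= linear0.
  have [[q1 q2] <-] := pX_surj c; rewrite hvC /= => /iBpB_exact [b hb].
  have [x hx] := v_surj b.
  exists (pA (q1 - phi x)); rewrite huC /=.
  apply/eqP; rewrite -subr_eq0 -linearB; apply/eqP/pX_ker; exists (- x).
  by rewrite /= !linearN hx hb; congr (_, _); rewrite /= ?sub0r // addrAC subrr add0r.
- by move=> cb; have [q <-] := pB_surj cb; exists (pX (inrL q)); rewrite hvC.
Qed.
End Horseshoe.

(* Gorenstein classes: an intrinsic description of Gorenstein projective
   modules, avoiding the bookkeeping of complete resolutions. *)
Section GorensteinClass.
Context {R : pzRingType}.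
Implicit Types A B X K P Q : lmodType R.

Definition gorenstein_class (S : lmodType R -> Prop) : Prop :=
  forall K, S K -> [/\ ext_proj_vanishes K,
    (exists K' Q (i : {linear K' -> Q}) (p : {linear Q -> K}),
       [/\ projective Q, short_exact i p & S K']) &
    (exists Q K'' (i : {linear K -> Q}) (p : {linear Q -> K''}),
       [/\ projective Q, short_exact i p & S K''])].

Definition in_gorenstein_class G : Prop := exists S, gorenstein_class S /\ S G.

(* The extensions of members of one Gorenstein class by members of another
   form a Gorenstein class, by the two horseshoe lemmas. *)
Lemma gorenstein_class_extension {A X B} {u : {linear A -> X}} {v : {linear X -> B}} :
  short_exact u v -> in_gorenstein_class A -> in_gorenstein_class B -> in_gorenstein_class X.
Proof.
move=> uv [SA [SA_gor A_in]] [SB [SB_gor B_in]].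
exists (fun Y : lmodType R => exists A' B' (u' : {linear A' -> Y}) (v' : {linear Y -> B'}),
   [/\ short_exact u' v', SA A' & SB B']).
split; last by exists A, B, u, v.
move=> Y [A' [B' [u' [v' [u'v' A'_in B'_in]]]]].
have [A'_ext [KA [QA [iA [pA [QA_proj iApA KA_in]]]]]
  [QA' [CA [iA' [pA' [QA'_proj iA'pA' CA_in]]]]]] := SA_gor _ A'_in.
have [B'_ext [KB [QB [iB [pB [QB_proj iBpB KB_in]]]]]
  [QB' [CB [iB' [pB' [QB'_proj iB'pB' CB_in]]]]]] := SB_gor _ B'_in.
split.
- exact: ext_proj_vanishes_extension u'v' A'_ext B'_ext.
- have [KX [iX [pX [uK [vK [iXpX uKvK]]]]]] := horseshoe_presentation u'v' iApA iBpB QB_proj.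
  exists KX, (QA * QB)%type, iX, pX; split => //; first exact: projective_prod.
  by exists KA, KB, uK, vK.
- have [CX [iX [pX [uC [vC [iXpX uCvC]]]]]] :=
    horseshoe_copresentation u'v' iA'pA' iB'pB' QA'_proj B'_ext.
  exists (QA' * QB')%type, CX, iX, pX; split => //; first exact: projective_prod.
  by exists CA, CB, uC, vC.
Qed.

(* Projective modules form a Gorenstein class, via 0 -> 0 -> P -> P -> 0
   and 0 -> P -> P -> 0 -> 0. *)
Lemma projective_gorenstein_class : gorenstein_class (@projective R).
Proof.
move=> P P_proj; have [Z Z0] := @zero_module_exists R.
have Z_proj := projective_zero Z0.
split; first exact: projective_ext_vanishes.
- exists Z, P, \0, idfun; split => //; split => //.
  + by move=> a b _; rewrite (Z0 a) (Z0 b).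
  + by move=> y; split=> [/= -> | [x <-]]; first exists 0.
  + by move=> y; exists y.
- exists P, Z, idfun, \0; split => //; split => //.
  + by move=> y; split=> // _; exists y.
  + by move=> y; exists 0; rewrite (Z0 y).
Qed.

Lemma projective_in_gorenstein_class P : projective P -> in_gorenstein_class P.
Proof.
by move=> P_proj; exists (@projective R); split => //; exact: projective_gorenstein_class.
Qed.
End GorensteinClass.

(* Every integer is a successor; used to bring an arbitrary index of a
   complete resolution to the form j + 1 that its axioms are stated for. *)
Lemma int_succ_ind (Pr : int -> Prop) : (forall j, Pr (j + 1)) -> forall k, Pr k.
Proof. by move=> h k; rewrite -(subrK 1 k); apply: h. Qed.

Section CompleteResolution.
Context {R : pzRingType}.
Implicit Types K T : lmodType R.
Variables (P : int -> lmodType R) (d : forall i : int, {linear P i -> P (i + 1)}).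
Hypotheses (P_proj : forall i, projective (P i))
  (d_exact : forall (i : int) (y : P (i + 1)), d (i + 1) y = 0 <-> exists x, d i x = y)
  (d_hom_exact : forall {Q : lmodType R}, projective Q ->
     forall (i : int) (f : {linear P (i + 1) -> Q}), (forall x, f (d i x) = 0) ->
     exists g : {linear P (i + 1 + 1) -> Q}, forall y, g (d (i + 1) y) = f y).

Definition embeds_as_cycles {K : lmodType R} {k : int} (phi : {linear K -> P k}) : Prop :=
  injective phi /\ forall y, (exists x, phi x = y) <-> d k y = 0.

Definition cycle_module (K : lmodType R) : Prop :=
  exists k (phi : {linear K -> P k}), embeds_as_cycles phi.

(* Maps from the cycles into a projective extend to the whole term: this is
   exactness of Hom(complete resolution, projective). *)
Lemma cycle_maps_extend k T : projective T ->
  forall K (phi : {linear K -> P k}), embeds_as_cycles phi ->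
  forall h : {linear K -> T}, exists g : {linear P k -> T}, forall x, g (phi x) = h x.
Proof.
move: k; elim/int_succ_ind => k; move: k; elim/int_succ_ind => i.
move=> T_proj K phi [phi_inj phi_im] h.
have [f0 hf0] : exists f0 : {linear P (i + 1) -> K}, forall y, phi (f0 y) = d (i + 1) y.
  by apply: factor_inj => // y; apply/phi_im; apply/d_exact; exists y.
have [g hg] : exists g : {linear P (i + 1 + 1) -> T}, forall y, g (d (i + 1) y) = (h \o f0) y.
  apply: d_hom_exact => // x /=; suff -> : f0 (d i x) = 0 by rewrite linear0.
  by apply: (inj_eq0 phi_inj); rewrite hf0; apply/d_exact; exists x.
exists g => z; have /d_exact [y hy] : d (i + 1 + 1) (phi z) = 0 by apply/phi_im; exists z.
by rewrite -hy hg /=; congr (h _); apply: phi_inj; rewrite hf0.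
Qed.

Lemma cycle_gorenstein_class : gorenstein_class cycle_module.
Proof.
move=> K [k]; move: k; elim/int_succ_ind => j [phi [phi_inj phi_im]].
(* 0 -> Z j -> P j -> K -> 0, K being the image of d j *)
have [p hp] : exists p : {linear P j -> K}, forall x, phi (p x) = d j x.
  by apply: factor_inj => // x; apply/phi_im; apply/d_exact; exists x.
have [K' [kap [kap_inj kap_im]]] := kernel_exists p.
have kap_cycles : embeds_as_cycles kap.
  split=> // y; rewrite kap_im -hp.
  by split=> [-> | /(inj_eq0 phi_inj)]; rewrite ?linear0.
have kap_p : short_exact kap p.
  split=> //; first by move=> y; split=> /kap_im.
  move=> z; have /d_exact [x hx] : d (j + 1) (phi z) = 0 by apply/phi_im; exists z.
  by exists x; apply: phi_inj; rewrite hp.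
(* 0 -> K -> P (j + 1) -> Z (j + 2) -> 0 *)
have [C [kap' [kap'_inj kap'_im]]] := kernel_exists (d (j + 1 + 1)).
have [q hq] : exists q : {linear P (j + 1) -> C}, forall y, kap' (q y) = d (j + 1) y.
  by apply: factor_inj => // y; apply/kap'_im; apply/d_exact; exists y.
split.
- apply: (ext_proj_vanishes_of_presentation kap_p (P_proj j)) => T T_proj.
  exact: cycle_maps_extend T_proj _ kap kap_cycles.
- by exists K', (P j), kap, p; split => //; exists j, kap.
- exists (P (j + 1)), C, phi, q; split => //; last by exists (j + 1 + 1), kap'.
  split => //.
  + move=> y; rewrite phi_im -hq.
    by split=> [-> | /(inj_eq0 kap'_inj)]; rewrite ?linear0.
  + move=> z; have /d_exact [y hy] : d (j + 1 + 1) (kap' z) = 0 by apply/kap'_im; exists z.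
    by exists y; apply: kap'_inj; rewrite hq.
Qed.
End CompleteResolution.

Lemma gorenstein_projective_in_class {R : pzRingType} (G : lmodType R) :
  gorenstein_projective G -> in_gorenstein_class G.
Proof.
move=> [P [d [P_proj d_exact d_hom_exact [iota [iota_inj iota_im]]]]].
exists (@cycle_module R P d); split; first exact: cycle_gorenstein_class.
exists (0 + 1), iota; split => // y; rewrite iota_im; split; by move/d_exact.
Qed.

Section Cast.
Context {R : pzRingType}.
Definition castL {X Y : lmodType R} (e : X = Y) : {linear X -> Y} :=
  match e in _ = Y return {linear X -> Y} with erefl => idfun end.
Lemma castLK {X Y : lmodType R} (e : X = Y) x : castL (esym e) (castL e x) = x.
Proof. by case: Y / e. Qed.

Lemma castL_inj {X Y : lmodType R} (e : X = Y) : injective (castL e).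
Proof. by move=> x y h; rewrite -(castLK e x) h castLK. Qed.

Lemma castL_surj {X Y : lmodType R} (e : X = Y) : surj (castL e).
Proof. by case: Y / e => y; exists y. Qed.
End Cast.

Record cover {R : pzRingType} (C : lmodType R) := Cover {
  cover_ker : lmodType R; cover_mid : lmodType R;
  cover_i : {linear cover_ker -> cover_mid}; cover_p : {linear cover_mid -> C} }.
Record envelope {R : pzRingType} (C : lmodType R) := Envelope {
  envelope_mid : lmodType R; envelope_coker : lmodType R;
  envelope_i : {linear C -> envelope_mid}; envelope_p : {linear envelope_mid -> envelope_coker} }.
Record ses_data (R : pzRingType) := SesData {
  ses_l : lmodType R; ses_m : lmodType R; ses_r : lmodType R;
  ses_i : {linear ses_l -> ses_m}; ses_p : {linear ses_m -> ses_r} }.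
Arguments cover_ker {R C}. Arguments cover_mid {R C}.
Arguments cover_i {R C}. Arguments cover_p {R C}.
Arguments envelope_mid {R C}. Arguments envelope_coker {R C}.
Arguments envelope_i {R C}. Arguments envelope_p {R C}.
Arguments ses_l {R}. Arguments ses_m {R}. Arguments ses_r {R}.
Arguments ses_i {R}. Arguments ses_p {R}.

(* Conversely, every member of a Gorenstein class is Gorenstein projective:
   splicing chosen covers of its iterated kernels with chosen envelopes of its
   iterated cokernels gives a complete resolution. *)
Section ClassToResolution.
Context {R : pzRingType}.
Variables (S : lmodType R -> Prop) (S_gor : gorenstein_class S) (G : lmodType R) (G_in : S G).

Definition good_cover {C} (c : cover C) : Prop :=
  [/\ projective (cover_mid c), short_exact (cover_i c) (cover_p c) & S (cover_ker c)].
Definition good_envelope {C} (c : envelope C) : Prop :=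
  [/\ projective (envelope_mid c), short_exact (envelope_i c) (envelope_p c)
    & S (envelope_coker c)].

Lemma good_cover_exists {C} : S C -> exists c : cover C, good_cover c.
Proof. by move=> /S_gor [_ [K [Q [i [p [Q_proj ip K_in]]]]] _]; exists (@Cover _ _ _ _ i p). Qed.

Lemma good_envelope_exists {C} : S C -> exists c : envelope C, good_envelope c.
Proof.
by move=> /S_gor [_ _ [Q [C' [i [p [Q_proj ip C'_in]]]]]]; exists (@Envelope _ _ _ _ i p).
Qed.

Definition cover_of {C} (h : S C) : cover C :=
  proj1_sig (constructive_indefinite_description _ (good_cover_exists h)).
Definition envelope_of {C} (h : S C) : envelope C :=
  proj1_sig (constructive_indefinite_description _ (good_envelope_exists h)).
Lemma cover_ofP {C} (h : S C) : good_cover (cover_of h).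
Proof. exact: proj2_sig (constructive_indefinite_description _ (good_cover_exists h)). Qed.

Lemma envelope_ofP {C} (h : S C) : good_envelope (envelope_of h).
Proof. exact: proj2_sig (constructive_indefinite_description _ (good_envelope_exists h)). Qed.

Lemma cover_of_in {C} (h : S C) : S (cover_ker (cover_of h)).
Proof. by case: (cover_ofP h). Qed.

Lemma envelope_of_in {C} (h : S C) : S (envelope_coker (envelope_of h)).
Proof. by case: (envelope_ofP h). Qed.

Definition member := {C : lmodType R | S C}.
Fixpoint syz (m : nat) : member :=
  if m is m'.+1 then exist _ _ (cover_of_in (proj2_sig (syz m'))) else exist _ G G_in.
Fixpoint cosyz (m : nat) : member :=
  if m is m'.+1 then exist _ _ (envelope_of_in (proj2_sig (cosyz m'))) else exist _ G G_in.

Definition ses_of_cover {C} (c : cover C) : ses_data R := @SesData _ _ _ _ (cover_i c) (cover_p c).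
Definition ses_of_envelope {C} (c : envelope C) : ses_data R :=
  @SesData _ _ _ _ (envelope_i c) (envelope_p c).

(* The short exact piece of the complete resolution with middle term in degree i. *)
Definition piece (i : int) : ses_data R :=
  match i with
  | Posz 0 => ses_of_cover (cover_of (proj2_sig (syz 0)))
  | Posz m.+1 => ses_of_envelope (envelope_of (proj2_sig (cosyz m)))
  | Negz m => ses_of_cover (cover_of (proj2_sig (syz m.+1)))
  end.

Lemma piece_ok i :
  [/\ projective (ses_m (piece i)), short_exact (ses_i (piece i)) (ses_p (piece i)),
  S (ses_l (piece i)) & S (ses_r (piece i))].
Proof.
case: i => [[|m]|m] /=.
- by case: (cover_ofP G_in).
- by case: (envelope_ofP (proj2_sig (cosyz m))) => *; split => //; exact: proj2_sig (cosyz m).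
- by case: (cover_ofP (proj2_sig (syz m.+1))) => *; split => //; exact: proj2_sig (syz m.+1).
Qed.

Lemma piece_glue i : ses_r (piece i) = ses_l (piece (i + 1)).
Proof.
case: i => [[|m]|[|m]] //.
- by have -> : Posz m.+1 + 1 = Posz m.+2 by rewrite -[in RHS]addn1 PoszD.
- by have -> : Negz m.+1 + 1 = Negz m by rewrite !NegzE -addn1 PoszD opprD subrK.
Qed.

Definition res (i : int) : lmodType R := ses_m (piece i).
Definition res_d (i : int) : {linear res i -> res (i + 1)} :=
  ses_i (piece (i + 1)) \o castL (piece_glue i) \o ses_p (piece i).

Lemma res_d_im i (y : res (i + 1)) :
  (exists x, res_d i x = y) <-> exists a, ses_i (piece (i + 1)) a = y.
Proof.
split=> [[x <-] | [a <-]]; first by exists (castL (piece_glue i) (ses_p (piece i) x)).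
have [b <-] := castL_surj (piece_glue i) a.
by have [_ [_ _ p_surj] _ _] := piece_ok i; have [x <-] := p_surj b; exists x.
Qed.

Lemma res_d_ker i (y : res i) : res_d i y = 0 <-> ses_p (piece i) y = 0.
Proof.
split=> [|/= ->]; last by rewrite !linear0.
have [_ [i_inj _ _] _ _] := piece_ok (i + 1).
by move=> /(inj_eq0 i_inj) /(inj_eq0 (castL_inj _)).
Qed.

Lemma class_member_gorenstein_projective : gorenstein_projective G.
Proof.
exists res, res_d; split.
- by move=> i; case: (piece_ok i).
- move=> i y; rewrite res_d_ker res_d_im.
  by have [_ [_ exact _] _ _] := piece_ok (i + 1).
- move=> Q Q_proj i f f_d0.
  have [_ [_ ip_exact _] _ _] := piece_ok (i + 1).
  (* f factors through the cokernel, which is the left end of the next piece *)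
  have [fb hfb] : exists fb : {linear ses_r (piece (i + 1)) -> Q},
      forall y, fb (ses_p (piece (i + 1)) y) = f y.
    apply: factor_surj => [|y /ip_exact [a <-]]; first by case: (piece_ok (i + 1)) => _ [].
    by have [x <-] := (res_d_im i (ses_i (piece (i + 1)) a)).2 (ex_intro _ a erefl); apply: f_d0.
  have [_ next _ next_in] := piece_ok (i + 1 + 1).
  have [next_ext _ _] := S_gor _ next_in.
  have [g hg] := next_ext _ _ _ _ next Q Q_proj (fb \o castL (esym (piece_glue (i + 1)))).
  by exists g => y; rewrite /= hg /= castLK hfb.
- have [_ [i_inj _ _] _ _] := piece_ok (0 + 1).
  exists (ses_i (piece (0 + 1))); split => // y.
  by rewrite res_d_im.
Qed.
End ClassToResolution.

Lemma gorenstein_projectiveE {R : pzRingType} (G : lmodType R) :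
  gorenstein_projective G <-> in_gorenstein_class G.
Proof.
split; first exact: gorenstein_projective_in_class.
by move=> [S [S_gor G_in]]; exact: class_member_gorenstein_projective S_gor G G_in.
Qed.

Section Diagrams.
Context {R : pzRingType}.
Implicit Types A B C E H K M N Q X Y G : lmodType R.

Definition pushout_square {K Y N X} (k : {linear K -> Y}) (u : {linear K -> N})
    (al : {linear Y -> X}) (be : {linear N -> X}) : Prop :=
  [/\ forall z, al (k z) = be (u z),
      forall x, exists y n, al y + be n = x &
      forall y n, al y + be n = 0 -> exists z, k z = y /\ u z = - n].

(* The pushout is the cokernel of (k, -u) : K -> Y x N. *)
Lemma pushout_exists {K Y N} (k : {linear K -> Y}) (u : {linear K -> N}) :
  exists X (al : {linear Y -> X}) (be : {linear N -> X}), pushout_square k u al be.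
Proof.
have [X [pi [pi_surj pi_ker]]] := cokernel_exists (pairL k (\- u)).
exists X, (pi \o inlL), (pi \o inrL); split.
- move=> z; apply/eqP; rewrite /= -subr_eq0 -linearB; apply/eqP/pi_ker.
  by exists z; congr (_, _); rewrite /= ?subr0 ?sub0r.
- move=> x; have [[y n] <-] := pi_surj x; exists y, n.
  by rewrite -[in RHS](pair_split (y, n)) linearD.
- move=> y n; rewrite /= -linearD => /pi_ker [z hz]; exists z.
  have := congr1 fst hz; have := congr1 snd hz; rewrite /= add0r addr0 => <- ->.
  by rewrite opprK.
Qed.

(* The pushout square is symmetric, up to a sign. *)
Lemma pushout_square_sym {K Y N X} {k : {linear K -> Y}} {u : {linear K -> N}}
    {al : {linear Y -> X}} {be : {linear N -> X}} :
  pushout_square k u al be -> pushout_square u k be al.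
Proof.
move=> [comm gen rel]; split.
- by move=> z; rewrite comm.
- by move=> x; have [y [n <-]] := gen x; exists n, y; rewrite addrC.
- move=> n y; rewrite addrC => /rel [z [kz uz]].
  by exists (- z); rewrite !linearN uz kz opprK.
Qed.

Lemma pushout_ses {K Y N X G} {k : {linear K -> Y}} {u : {linear K -> N}}
    {al : {linear Y -> X}} {be : {linear N -> X}} {v : {linear N -> G}} :
  pushout_square k u al be -> short_exact u v ->
  exists v' : {linear X -> G}, short_exact al v' /\ forall n, v' (be n) = v n.
Proof.
move=> [comm gen rel] uv; case: (uv) => u_inj uv_exact v_surj.
have [v' hv'] : exists v' : {linear X -> G}, forall w, v' (copairL al be w) = (v \o snd) w.
  apply: factor_surj => [x | [y n] /= /rel [z [_ uz]]].
    by have [y [n <-]] := gen x; exists (y, n).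
  by rewrite -[n]opprK -uz linearN (ses_comp0 z uv) oppr0.
have v'_be n : v' (be n) = v n by have := hv' (0, n); rewrite /= linear0 add0r.
exists v'; split => //; split.
- apply: ker0_inj => y e; have e' : al y + be 0 = 0 by rewrite linear0 addr0.
  have [z [<- uz]] := rel y 0 e'.
  by rewrite oppr0 in uz; rewrite (inj_eq0 u_inj uz) linear0.
- move=> x; have [y [n <-]] := gen x; split.
    have /= -> := hv' (y, n); move=> /uv_exact [z <-].
    by exists (y + k z); rewrite linearD comm.
  by move=> [y' <-]; have := hv' (y', 0); rewrite /= !linear0 addr0.
- by move=> g; have [n <-] := v_surj g; exists (be n).
Qed.

Definition pullback_square {Y B K E} (f : {linear Y -> K}) (g : {linear B -> K})
    (p1 : {linear E -> Y}) (p2 : {linear E -> B}) : Prop :=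
  [/\ forall x, f (p1 x) = g (p2 x),
      forall y b, f y = g b -> exists x, p1 x = y /\ p2 x = b &
      forall x x', p1 x = p1 x' -> p2 x = p2 x' -> x = x'].

(* The pullback is the kernel of (y, b) |-> f y - g b. *)
Lemma pullback_exists {Y B K} (f : {linear Y -> K}) (g : {linear B -> K}) :
  exists E (p1 : {linear E -> Y}) (p2 : {linear E -> B}), pullback_square f g p1 p2.
Proof.
have [E [i [i_inj i_im]]] := kernel_exists ((f \o fst) \- (g \o snd)).
have i_imE y b : (exists x, i x = (y, b)) <-> f y = g b.
  by rewrite i_im /=; split=> [/eqP | ->]; rewrite ?subr_eq0 ?subrr // => /eqP.
exists E, (fst \o i), (snd \o i); split.
- move=> x /=; have /i_imE : exists x', i x' = ((i x).1, (i x).2) by exists x; case: (i x).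
  by [].
- by move=> y b /i_imE [x hx]; exists x; rewrite /= hx.
- move=> x x' /= e1 e2; apply: i_inj.
  by move: e1 e2; case: (i x) => ? ?; case: (i x') => ? ? /= -> ->.
Qed.

Section PullbackSquare.
Context {Y B K E : lmodType R} {f : {linear Y -> K}} {g : {linear B -> K}}
  {p1 : {linear E -> Y}} {p2 : {linear E -> B}}.
Hypothesis pb : pullback_square f g p1 p2.

Lemma pullback_lift {W : lmodType R} {h1 : {linear W -> Y}} {h2 : {linear W -> B}} :
  (forall w, f (h1 w) = g (h2 w)) ->
  exists h : {linear W -> E}, forall w, p1 (h w) = h1 w /\ p2 (h w) = h2 w.
Proof.
case: pb => _ elems joint_inj comm.
have [h hh] : exists h : {linear W -> E}, forall w, pairL p1 p2 (h w) = pairL h1 h2 w.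
  apply: factor_inj => [x x' /= [] | w]; first exact: joint_inj.
  by have [x [hx1 hx2]] := elems _ _ (comm w); exists x; rewrite /= hx1 hx2.
by exists h => w; have /= [-> ->] := hh w.
Qed.

Lemma pullback_surj : surj f -> surj p2.
Proof.
case: pb => _ elems _ f_surj b; have [y hy] := f_surj (g b).
by have [x [_ <-]] := elems _ _ hy; exists x.
Qed.

Lemma pullback_ses {H} {u : {linear H -> B}} :
  short_exact u g -> exists u' : {linear H -> E}, short_exact u' p1 /\ forall h, p2 (u' h) = u h.
Proof.
move=> ug; case: (pb) => comm elems joint_inj; case: (ug) => u_inj ug_exact g_surj.
have comm0 h : f ((\0 : {linear H -> Y}) h) = g (u h) by rewrite /= linear0 (ses_comp0 h ug).
have [u' hu'] := pullback_lift comm0.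
exists u'; split; last by move=> h; case: (hu' h).
split.
- by move=> h h' e; apply: u_inj; rewrite -(hu' h).2 -(hu' h').2 e.
- move=> x; split=> [p1x0 | [h <-]]; last by case: (hu' h).
  have /ug_exact [h hh] : g (p2 x) = 0 by rewrite -comm p1x0 linear0.
  exists h; apply: joint_inj; first by rewrite (hu' h).1 p1x0.
  by rewrite (hu' h).2.
- move=> y; have [b hb] := g_surj (f y).
  by have [x [<- _]] := elems _ _ (esym hb); exists x.
Qed.
End PullbackSquare.

(* Third isomorphism theorem, cokernel form: for A <= B <= C,
   0 -> B / A -> C / A -> C / B -> 0. *)
Lemma ses_cokernel_composite {A B M C G} {f : {linear A -> B}} {q : {linear B -> M}}
    {g : {linear B -> C}} {r : {linear C -> G}} :
  short_exact f q -> short_exact g r ->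
  exists N (s : {linear C -> N}) (t : {linear M -> N}) (w : {linear N -> G}),
    short_exact (g \o f) s /\ short_exact t w.
Proof.
move=> fq gr; case: (fq) => f_inj fq_exact q_surj; case: (gr) => g_inj gr_exact r_surj.
have [N [s [s_surj s_ker]]] := cokernel_exists (g \o f).
have [t ht] : exists t : {linear M -> N}, forall x, t (q x) = (s \o g) x.
  apply: factor_surj => // x /fq_exact [a <-]; apply/s_ker; by exists a.
have [w hw] : exists w : {linear N -> G}, forall y, w (s y) = r y.
  by apply: factor_surj => // y /s_ker [a <-]; exact: ses_comp0 gr.
exists N, s, t, w; split; split => //.
- by move=> a a' /= /g_inj /f_inj.
- apply: ker0_inj => m; have [x <-] := q_surj m; rewrite ht => /s_ker [a /= /g_inj <-].
  exact: ses_comp0 fq.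
- move=> n; have [y <-] := s_surj n; rewrite hw; split=> [/gr_exact [x <-] | [m]].
    by exists (q x); rewrite ht.
  have [x <-] := q_surj m; rewrite ht => /esym /eqP; rewrite -subr_eq0 -linearB => /eqP.
  move=> /s_ker [a /= e]; have -> : y = g (x + f a) by rewrite linearD e addrC subrK.
  exact: ses_comp0 gr.
- by move=> z; have [y <-] := r_surj z; exists (s y).
Qed.

(* Third isomorphism theorem, kernel form: for surjections Q -> Y1 -> Y0,
   0 -> ker (Q -> Y1) -> ker (Q -> Y0) -> ker (Y1 -> Y0) -> 0. *)
Lemma ses_kernel_composite {H Q K} {Y1 Y0 : lmodType R} {h : {linear H -> Q}} {q : {linear Q -> Y1}}
    {k : {linear K -> Y1}} {g : {linear Y1 -> Y0}} :
  short_exact h q -> short_exact k g ->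
  exists B (j : {linear B -> Q}) (u : {linear H -> B}) (v : {linear B -> K}),
    short_exact j (g \o q) /\ short_exact u v.
Proof.
move=> hq kg; case: (hq) => h_inj hq_exact q_surj; case: (kg) => k_inj kg_exact g_surj.
have [B [j [j_inj j_im]]] := kernel_exists (g \o q).
have [v hv] : exists v : {linear B -> K}, forall b, k (v b) = (q \o j) b.
  by apply: factor_inj => // b; apply/kg_exact; apply/j_im; exists b.
have [u hu] : exists u : {linear H -> B}, forall x, j (u x) = h x.
  by apply: factor_inj => // x; apply/j_im; rewrite /= (ses_comp0 x hq) linear0.
exists B, j, u, v; split; split => //.
- by move=> y; split=> /j_im.
- by move=> y; have [x <-] := g_surj y; have [z <-] := q_surj x; exists z.
- by move=> x x' e; apply: h_inj; rewrite -!hu e.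
- move=> b; split=> [vb0 | [x <-]].
    have /hq_exact [x hx] : q (j b) = 0 by rewrite -[q (j b)]/((q \o j) b) -hv vb0 linear0.
    by exists x; apply: j_inj; rewrite hu.
  by apply: k_inj; rewrite hv /= hu (ses_comp0 x hq) linear0.
- move=> z; have [y hy] := q_surj (k z).
  have [b hb] : exists b, j b = y by apply/j_im; rewrite /= hy (ses_comp0 z kg).
  by exists b; apply: k_inj; rewrite hv /= hb.
Qed.
End Diagrams.

Section GorensteinSteps.
Context {R : pzRingType}.
Implicit Types A B G H K M N P Q X Y : lmodType R.

Lemma gorenstein_projective_extension {A X B} {u : {linear A -> X}} {v : {linear X -> B}} :
  short_exact u v -> gorenstein_projective A -> gorenstein_projective B ->
  gorenstein_projective X.
Proof.
rewrite !gorenstein_projectiveE; exact: gorenstein_class_extension.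
Qed.

Lemma projective_gorenstein_projective P : projective P -> gorenstein_projective P.
Proof. by move=> P_proj; apply/gorenstein_projectiveE; exact: projective_in_gorenstein_class. Qed.

(* 0 -> N' -> X -> M -> 0 with X Gorenstein projective: embedding X into a
   projective P with Gorenstein projective cokernel G gives 0 -> N' -> P -> N -> 0
   and 0 -> M -> N -> G -> 0. *)
Lemma gorenstein_envelope_step {N' X M} {f : {linear N' -> X}} {q : {linear X -> M}} :
  short_exact f q -> gorenstein_projective X ->
  exists P N G (i : {linear N' -> P}) (p : {linear P -> N}) (t : {linear M -> N})
    (w : {linear N -> G}),
    [/\ projective P, short_exact i p, gorenstein_projective G & short_exact t w].
Proof.
move=> fq /gorenstein_projectiveE [S [S_gor X_in]].
have [_ _ [P [G [i [p [P_proj ip G_in]]]]]] := S_gor _ X_in.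
have [N [s [t [w [ifs tw]]]]] := ses_cokernel_composite fq ip.
exists P, N, G, (i \o f), s, t, w; split => //.
by apply/gorenstein_projectiveE; exists S.
Qed.

(* 0 -> K -> Y1 -> Y0 -> 0 with Y1 Gorenstein projective: covering Y1 by a
   projective Q with Gorenstein projective kernel H gives 0 -> B -> Q -> Y0 -> 0
   and 0 -> H -> B -> K -> 0. *)
Lemma gorenstein_cover_step {K Y1 Y0 : lmodType R} {k : {linear K -> Y1}} {g : {linear Y1 -> Y0}} :
  short_exact k g -> gorenstein_projective Y1 ->
  exists Q B H (j : {linear B -> Q}) (p : {linear Q -> Y0}) (u : {linear H -> B})
    (v : {linear B -> K}),
    [/\ projective Q, short_exact j p, gorenstein_projective H & short_exact u v].
Proof.
move=> kg /gorenstein_projectiveE [S [S_gor Y1_in]].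
have [_ [H [Q [h [q [Q_proj hq H_in]]]]] _] := S_gor _ Y1_in.
have [B [j [u [v [jgq uv]]]]] := ses_kernel_composite hq kg.
exists Q, B, H, j, (g \o q), u, v; split => //.
by apply/gorenstein_projectiveE; exists S.
Qed.
End GorensteinSteps.

(* Finite exact sequences are encoded as families Y : nat -> lmodType R with maps
   e i : Y i -> Y i.-1 (the map in degree 0 is irrelevant). They are spliced
   from the bottom with [mcons] (put a new module in degree 0) and [shift]
   (drop degree 0). *)
Section Splicing.
Context {R : pzRingType}.
Implicit Types A B E K M X Y : lmodType R.

Definition mcons (X0 : lmodType R) (Y : nat -> lmodType R) : nat -> lmodType R :=
  fun i => if i is k.+1 then Y k else X0.
Definition mcons_d {X0 : lmodType R} {Y : nat -> lmodType R} (f0 : {linear Y 0%N -> X0})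
    (e : forall i, {linear Y i -> Y i.-1}) : forall i, {linear mcons X0 Y i -> mcons X0 Y i.-1} :=
  fun i => match i as i0 return {linear mcons X0 Y i0 -> mcons X0 Y i0.-1} with
  | 0 => idfun | 1 => f0 | k.+2 => e k.+1 end.

Definition shift (Y : nat -> lmodType R) : nat -> lmodType R := fun i => Y i.+1.
Definition shift_d {Y : nat -> lmodType R} (e : forall i, {linear Y i -> Y i.-1}) :
    forall i, {linear shift Y i -> shift Y i.-1} :=
  fun i => match i as i0 return {linear shift Y i0 -> shift Y i0.-1} with
  | 0 => idfun | k.+1 => e k.+2 end.

Definition const_d (X : lmodType R) : forall i, {linear (fun=> X) i -> (fun=> X) i.-1} :=
  fun=> idfun.

Lemma lexact_one {C : lmodType R -> Prop} {A X1 X0 : lmodType R}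
    {a : {linear A -> X1}} {p : {linear X1 -> X0}} :
  short_exact a p -> C X1 -> lexact C 1 A (mcons X0 (fun=> X1)) (mcons_d p (const_d X1)) a.
Proof.
case=> a_inj ap_exact p_surj X1_C; split => //.
- by move=> i /andP [i_gt0 i_lt1]; case: i i_gt0 i_lt1 => [|[|]].
- by move=> [|[|]].
Qed.

Lemma rexact_one {C : lmodType R -> Prop} {M X1 X0 : lmodType R}
    {j : {linear X1 -> X0}} {p : {linear X0 -> M}} :
  short_exact j p -> C X0 -> rexact C 1 M (mcons X0 (fun=> X1)) (mcons_d j (const_d X1)) p.
Proof.
case=> j_inj jp_exact p_surj X0_C; split => //.
- by move=> i /andP [i_gt0 i_lt1]; case: i i_gt0 i_lt1 => [|[|]].
- by move=> [|].
Qed.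

Lemma lexact_cons {C : lmodType R -> Prop} {n} {A} {Y : nat -> lmodType R}
    {e : forall i, {linear Y i -> Y i.-1}} {a : {linear A -> Y n.+1}}
    {X1 X0 : lmodType R} {i : {linear Y 0%N -> X1}} {p : {linear X1 -> X0}} :
  lexact C n.+1 A Y e a -> short_exact i p -> C X1 ->
  lexact C n.+2 A (mcons X0 (mcons X1 (shift Y)))
    (mcons_d p (mcons_d (i \o e 1%N : {linear shift Y 0%N -> X1}) (shift_d e))) a.
Proof.
move=> [a_inj top_exact mid_exact e1_surj mid_C] ip X1_C.
case: (ip) => i_inj ip_exact p_surj.
have ker_shift k y :
    mcons_d p (mcons_d (i \o e 1%N : {linear shift Y 0%N -> X1}) (shift_d e)) k.+2 y = 0
    <-> e k.+1 y = 0.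
  by case: k y => [|k] y //=; split=> [/(inj_eq0 i_inj) | ->]; rewrite ?linear0.
split => //.
- by move=> y; rewrite ker_shift; apply: top_exact.
- move=> [|[|k]] // /andP [_ hk] y; last by rewrite ker_shift; apply: mid_exact.
  rewrite /= ip_exact; split=> [[x <-] | [z <-]]; last by exists (e 1%N z).
  by have [z <-] := e1_surj x; exists z.
- by move=> [|[|k]] // /andP [_ hk]; apply: mid_C.
Qed.

Lemma rexact_cons {C : lmodType R -> Prop} {n} {B M Q0 : lmodType R} {W : nat -> lmodType R}
    {f : forall i, {linear W i -> W i.-1}} {p : {linear W 0%N -> B}}
    {j : {linear B -> Q0}} {q : {linear Q0 -> M}} :
  rexact C n.+1 B W f p -> short_exact j q -> C Q0 ->
  rexact C n.+2 M (mcons Q0 W) (mcons_d (j \o p) f) q.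
Proof.
move=> [top_inj mid_exact p_exact p_surj W_C] jq Q0_C.
case: (jq) => j_inj jq_exact q_surj; split => //.
- move=> [|[|k]] // /andP [_ hk] y; last exact: (mid_exact k.+1 hk y).
  rewrite /= -p_exact; split=> [/(inj_eq0 j_inj) // | ->]; exact: linear0.
- move=> y; rewrite jq_exact; split=> [[b <-] | [z <-]]; last by exists (p z).
  by have [z <-] := p_surj b; exists z.
- by move=> [|k] // hk; apply: W_C.
Qed.

Lemma lexact_kernel {C : lmodType R -> Prop} {n} {A} {Y : nat -> lmodType R}
    {e : forall i, {linear Y i -> Y i.-1}} {a : {linear A -> Y n.+2}} :
  lexact C n.+2 A Y e a ->
  exists (K : lmodType R) (k : {linear K -> Y 1%N}) (e2 : {linear Y 2%N -> K}),
    short_exact k (e 1%N) /\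
    lexact C n.+1 A (mcons K (shift (shift Y))) (mcons_d e2 (shift_d (shift_d e))) a.
Proof.
move=> [a_inj top_exact mid_exact e1_surj mid_C].
have [K [k [k_inj k_im]]] := kernel_exists (e 1%N).
have e1_exact := mid_exact 1%N erefl.
have [e2 he2] : exists e2 : {linear Y 2%N -> K}, forall y, k (e2 y) = e 2%N y.
  by apply: factor_inj => // y; apply/k_im; apply/e1_exact; exists y.
have ker_shift i y : mcons_d e2 (shift_d (shift_d e)) i.+1 y = 0 <-> e i.+2 y = 0.
  case: i y => [|i] y //=; split=> [e2y0 | e2y0]; first by rewrite -he2 e2y0 linear0.
  by apply: (inj_eq0 k_inj); rewrite he2.
exists K, k, e2; split; first by split => // y; split=> /k_im.
split => //.
- by move=> y; rewrite ker_shift; apply: top_exact.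
- by move=> [|i] // /andP [_ hi] y; rewrite ker_shift; exact: (mid_exact i.+2 hi y).
- move=> z; have /e1_exact [y hy] : e 1%N (k z) = 0 by apply/k_im; exists z.
  by exists y; apply: k_inj; rewrite he2.
- by move=> [|i] // /andP [_ hi]; exact: (mid_C i.+2 hi).
Qed.

Lemma lexact_pullback {C : lmodType R -> Prop} {n} {A B E : lmodType R} {Y : nat -> lmodType R}
    {e : forall i, {linear Y i -> Y i.-1}} {a : {linear A -> Y n.+1}}
    {g : {linear B -> Y 0%N}} {p1 : {linear E -> Y 1%N}} {p2 : {linear E -> B}} :
  lexact C n.+1 A Y e a -> pullback_square (e 1%N) g p1 p2 -> C E ->
  exists (e' : forall i, {linear mcons B (mcons E (shift (shift Y))) i ->
                                 mcons B (mcons E (shift (shift Y))) i.-1})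
    (a' : {linear A -> mcons B (mcons E (shift (shift Y))) n.+1}),
    lexact C n.+1 A (mcons B (mcons E (shift (shift Y)))) e' a'.
Proof.
move=> L pb E_C; case: (L) => a_inj top_exact mid_exact e1_surj mid_C.
have [comm _ joint_inj] := pb.
have p2_surj := pullback_surj pb e1_surj.
have lift (W : lmodType R) (h : {linear W -> Y 1%N}) : (forall w, e 1%N (h w) = 0) ->
    exists h' : {linear W -> E}, [/\ forall w, p1 (h' w) = h w, forall w, p2 (h' w) = 0 &
      ((forall y, e 1%N y = 0 <-> exists w, h w = y) -> forall x, p2 x = 0 <-> exists w, h' w = x)].
  move=> h0; have comm0 w : e 1%N (h w) = g ((\0 : {linear W -> B}) w) by rewrite h0 /= linear0.
  have [h' hh'] := pullback_lift pb comm0.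
  exists h'; split=> [w | w | h_im x]; [by case: (hh' w) | by case: (hh' w) | ].
  split=> [p2x0 | [w <-]]; last by case: (hh' w).
  have /h_im [w hw] : e 1%N (p1 x) = 0 by rewrite comm p2x0 linear0.
  by exists w; case: (hh' w) => pw p2w; apply: joint_inj; rewrite ?pw ?p2w ?hw ?p2x0.
case: n a L a_inj top_exact mid_exact mid_C => [|n] a L a_inj top_exact mid_exact mid_C.
-
  have [a' [pa' p2a' a'_im]] := lift _ a (fun w => (top_exact _).2 (ex_intro _ w erefl)).
  exists (mcons_d p2 (mcons_d \0 (shift_d (shift_d e)))), a'; split => //.
  + by move=> w w' e'; apply: a_inj; rewrite -!pa' e'.
  + exact: a'_im.
  + by move=> i /andP [i_gt0 i_lt1]; case: i i_gt0 i_lt1 => [|[|]].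
  + by move=> [|[|]].
- have e1_exact := mid_exact 1%N erefl.
  have [e2' [pe2' p2e2' e2'_im]] := lift _ (e 2%N) (fun y => (e1_exact _).2 (ex_intro _ y erefl)).
  have ker_shift i y : mcons_d p2 (mcons_d e2' (shift_d (shift_d e))) i.+2 y = 0 <-> e i.+2 y = 0.
    case: i y => [|i] y //=; split=> [e2y0 | e2y0]; first by rewrite -pe2' e2y0 linear0.
    by apply: joint_inj; rewrite ?pe2' ?p2e2' ?e2y0 !linear0.
  exists (mcons_d p2 (mcons_d e2' (shift_d (shift_d e)))), a; split => //.
  + by move=> y; rewrite ker_shift; apply: top_exact.
  + move=> [|[|i]] // /andP [_ hi] y; first exact: (e2'_im e1_exact).
    by rewrite ker_shift; exact: (mid_exact i.+2 hi y).
  + by move=> [|[|i]] // /andP [_ hi]; exact: (mid_C i.+2 hi).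
Qed.

Lemma lexact_weaken {C C' : lmodType R -> Prop} {n} {A} {Y : nat -> lmodType R}
    {e : forall i, {linear Y i -> Y i.-1}} {a : {linear A -> Y n}} :
  (forall X, C X -> C' X) -> lexact C n A Y e a -> lexact C' n A Y e a.
Proof. by move=> CC' [? ? ? ? Y_C]; split => // i hi; apply: CC'; apply: Y_C. Qed.

End Splicing.

(* For n > 1,
   cut at K = ker (G_1 -> M), treat 0 -> A -> ... -> G_2 -> K -> 0 by induction,
   push out 0 -> K -> N' -> G' -> 0 along K -> G_1 to get a Gorenstein projective
   X with 0 -> N' -> X -> M -> 0, and replace X by a projective. *)
Lemma gorenstein_to_projective_syzygy {R : pzRingType} {m : nat} :
  forall (A : lmodType R) (Y : nat -> lmodType R) (e : forall i, {linear Y i -> Y i.-1})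
    (a : {linear A -> Y m.+1}),
  lexact (@gorenstein_projective R) m.+1 A Y e a ->
  exists (Z : nat -> lmodType R) (f : forall i, {linear Z i -> Z i.-1}) (b : {linear A -> Z m.+1}),
    lexact (@projective R) m.+1 A Z f b /\
    exists (G : lmodType R) (u : {linear Y 0%N -> Z 0%N}) (v : {linear Z 0%N -> G}),
      gorenstein_projective G /\ short_exact u v.
Proof.
elim: m => [|m IH] A Y e a L; have [_ _ _ _ Y_gp] := L.
- have ae1 : short_exact a (e 1%N) by case: L => a_inj top_exact _ e1_surj _; split.
  have [P [N [G [i [p [t [w [P_proj ip G_gp tw]]]]]]]] :=
    gorenstein_envelope_step ae1 (Y_gp 1%N erefl).
  exists (mcons N (fun=> P)), (mcons_d p (const_d P)), i; split; first exact: lexact_one.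
  by exists G, t, w.
- have [K [k [e2 [ke1 L']]]] := lexact_kernel L.
  have [Z' [f' [b' [LZ' [G' [u [v [G'_gp uv]]]]]]]] := IH _ _ _ _ L'.
  have [X [al [be sq]]] := pushout_exists k u.
  have [v' [alv' _]] := pushout_ses sq uv.
  have [ga [bega _]] := pushout_ses (pushout_square_sym sq) ke1.
  have X_gp := gorenstein_projective_extension alv' (Y_gp 1%N erefl) G'_gp.
  have [P [N [G [i [p [t [w [P_proj ip G_gp tw]]]]]]]] := gorenstein_envelope_step bega X_gp.
  exists (mcons N (mcons P (shift Z'))); eexists; exists b'.
  split; first exact: lexact_cons LZ' ip P_proj.
  by exists G, t, w.
Qed.

(* For n > 1, cut at K = ker (G_1 -> M), cover G_1 to get 0 -> B' -> Q_1 -> M -> 0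
   and 0 -> H' -> B' -> K -> 0, pull G_2 -> K back along B' -> K to a Gorenstein
   projective E, and treat 0 -> A -> ... -> G_3 -> E -> B' -> 0 by induction. *)
Lemma gorenstein_to_projective_resolution {R : pzRingType} {m : nat} :
  forall (A : lmodType R) (Y : nat -> lmodType R) (e : forall i, {linear Y i -> Y i.-1})
    (a : {linear A -> Y m.+1}),
  lexact (@gorenstein_projective R) m.+1 A Y e a ->
  exists (W : nat -> lmodType R) (f : forall i, {linear W i -> W i.-1})
    (p : {linear W 0%N -> Y 0%N}),
    rexact (@projective R) m.+1 (Y 0%N) W f p /\
    exists (H : lmodType R) (u : {linear H -> W m.+1}) (v : {linear W m.+1 -> A}),
      gorenstein_projective H /\ short_exact u v.
Proof.
elim: m => [|m IH] A Y e a L; have [_ _ _ _ Y_gp] := L.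
- have ae1 : short_exact a (e 1%N) by case: L => a_inj top_exact _ e1_surj _; split.
  have [Q [B [H [j [p [u [v [Q_proj jp H_gp uv]]]]]]]] :=
    gorenstein_cover_step ae1 (Y_gp 1%N erefl).
  exists (mcons Q (fun=> B)), (mcons_d j (const_d B)), p; split; first exact: rexact_one.
  by exists H, u, v.
- have [K [k [e2 [ke1 L']]]] := lexact_kernel L.
  have [Q [B [H' [j [p [u [v [Q_proj jp H'_gp uv]]]]]]]] :=
    gorenstein_cover_step ke1 (Y_gp 1%N erefl).
  have [E [p1 [p2 sq]]] := pullback_exists e2 v.
  have [u' [u'p1 _]] := pullback_ses sq uv.
  have E_gp := gorenstein_projective_extension u'p1 H'_gp (Y_gp 2%N erefl).
  have [e' [a' L'']] := lexact_pullback L' sq E_gp.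
  have [W' [f' [p' [RW' [H [hu [hv [H_gp huhv]]]]]]]] := IH _ _ _ _ L''.
  exists (mcons Q W'); eexists; exists p; split; first exact: rexact_cons RW' jp Q_proj.
  by exists H, hu, hv.
Qed.

Theorem theorem2p4 (R : pzRingType) (n : nat) (A : lmodType R)
  (Y : nat -> lmodType R) (e : forall i, {linear Y i -> Y i.-1}) (a : {linear A -> Y n}) :
  (0 < n)%N ->
  @lexact R (@gorenstein_projective R) n A Y e a ->
  (* (1) ; here M = Y 0 *)
  (exists (Z : nat -> lmodType R) (f : forall i, {linear Z i -> Z i.-1}) (b : {linear A -> Z n}),
      @lexact R (@projective R) n A Z f b /\
      exists (G : lmodType R) (u : {linear Y 0%N -> Z 0%N}) (v : {linear Z 0%N -> G}),
        gorenstein_projective G /\ @short_exact R _ _ _ u v) /\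
  (forall X : lmodType R, syzygy n X <-> gorenstein_syzygy n X) /\
  (* (2) ; here B = W n *)
  (exists (W : nat -> lmodType R) (f : forall i, {linear W i -> W i.-1}) (p : {linear W 0%N -> Y 0%N}),
      @rexact R (@projective R) n (Y 0%N) W f p /\
      exists (H : lmodType R) (u : {linear H -> W n}) (v : {linear W n -> A}),
        gorenstein_projective H /\ @short_exact R _ _ _ u v).
Proof.
case: n a => [//|m] a _ L.
split; first exact: gorenstein_to_projective_syzygy L.
split; last exact: gorenstein_to_projective_resolution L.
(* a projective sequence is a Gorenstein projective one, and conversely by (1) *)
move=> X; split=> [[Z [f [b LZ]]] | [Z [f [b LZ]]]].
  by exists Z, f, b; apply: lexact_weaken LZ; exact: projective_gorenstein_projective.
by have [Z' [f' [b' [LZ' _]]]] := gorenstein_to_projective_syzygy _ _ _ _ LZ; exists Z', f', b'.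
Qed.
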